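(* Let $X$ be a real normed space of dimension at most $2$, $\mathcal M=\{M_1,\dots,M_n\}\subset\mathcal P^f_{\mathrm{Cl,Conv}}(X)$, $\Sigma(\mathcal M)\neq\emptyset$ and $d=(d_1,\dots,d_n)\in\Omega(\mathcal M)$. Then for every $K\in\Sigma_d(\mathcal M)$ there exists $i$ with $d_i=\sup_{x\in M_i}|x\,K|$.
   Context: For a metric space $X$, $p\in X$, $A\subset X$: $|p\,A|=\inf_{a\in A}|p\,a|$ ($=\infty$ if $A=\emptyset$); for $0\le r<\infty$, $B_r(A)=\{p:|p\,A|\le r\}$. For nonempty $A,B$, $d_H(A,B)=\max\{\sup_{a\in A}|a\,B|,\sup_{b\in B}|b\,A|\}\in[0,\infty]$. $\mathcal P_{\mathrm{Cl}}(X)$ is the set of nonempty closed subsets of $X$ with $d_H$; a finiteness class is an equivalence class of $A\sim B\iff d_H(A,B)<\infty$. $\mathcal P^f_{\mathrm{Cl,Conv}}(X)$ denotes a fixed finiteness class of the space of nonempty closed convex subsets of $X$ (a family of nonempty closed convex sets pairwise at finite Hausdorff distance, maximal with this property); let $\mathcal P^f_{\mathrm{Cl}}(X)$ be the finiteness class of $\mathcal P_{\mathrm{Cl}}(X)$ containing it. For $\mathcal M=\{M_1,\dots,M_n\}$ in it, $S_{\mathcal M}(Y)=\sum_i d_H(Y,M_i)$; $\Sigma(\mathcal M)$ is the set of minimizers of $S_{\mathcal M}$ over $\mathcal P^f_{\mathrm{Cl}}(X)$; for $K\in\Sigma(\mathcal M)$, $d(K)=(d_H(K,M_1),\dots,d_H(K,M_n))$;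 $\Omega(\mathcal M)=\{d(K):K\in\Sigma(\mathcal M)\}$; for $d\in\Omega(\mathcal M)$, $\Sigma_d(\mathcal M)=\{K\in\Sigma(\mathcal M):d(K)=d\}$. *)

From HB Require Import structures.
From mathcomp Require Import all_boot all_order all_algebra.
From mathcomp Require Import all_classical all_reals all_analysis.
Set Implicit Arguments. Unset Strict Implicit. Unset Printing Implicit Defensive.
Import Order.TTheory GRing.Theory Num.Theory.
Import numFieldNormedType.Exports.
Local Open Scope classical_set_scope.
Local Open Scope ring_scope.

Definition dim_le2 (R : realType) (X : normedModType R) : Prop :=
  exists v1 v2 : X, forall x : X, exists a b : R, x = a *: v1 + b *: v2.

Definition convexS (R : realType) (X : normedModType R) (A : set X) : Prop :=
  forall x y (t : R), A x -> A y -> 0 <= t -> t <= 1 ->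
    A (t *: x + (1 - t) *: y).

(* |p A| = inf_{a in A} |p - a|, in [0, +oo] (= +oo for A empty) *)
Definition distPS (R : realType) (X : normedModType R) (p : X) (A : set X)
  : \bar R := ereal_inf [set (`|p - a|)%:E | a in A].

Definition hausd (R : realType) (X : normedModType R) (A B : set X) : \bar R :=
  Order.max (ereal_sup [set distPS a B | a in A])
            (ereal_sup [set distPS b A | b in B]).

(* the finiteness class P^f_Cl(X) determined by the family M:
   nonempty closed sets at finite Hausdorff distance from the M_i *)
Definition admissible (R : realType) (X : normedModType R) (n : nat)
  (M : 'I_n -> set X) (Y : set X) : Prop :=
  closed Y /\ Y !=set0 /\ (forall i, (hausd Y (M i) < +oo)%E).

Definition SM (R : realType) (X : normedModType R) (n : nat)
  (M : 'I_n -> set X) (Y : set X) : \bar R :=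
  (\sum_(i < n) hausd Y (M i))%E.

Definition inSigma (R : realType) (X : normedModType R) (n : nat)
  (M : 'I_n -> set X) (K : set X) : Prop :=
  admissible M K /\ forall Y, admissible M Y -> (SM M K <= SM M Y)%E.

From HB Require Import structures.
From mathcomp Require Import all_boot all_order all_algebra.
From mathcomp Require Import all_classical all_reals all_analysis.
From mathcomp Require Import ring lra.
Import Order.TTheory GRing.Theory Num.Theory.
Import numFieldNormedType.Exports.
Local Open Scope classical_set_scope.
Local Open Scope ring_scope.

(* Suppose d_i > sup_{x in M_i} |x K| for every i, so that each d_i is
   attained on the side sup_{k in K} |k M_i| only, with a uniform margin mu.
   Push every point k of K a small fraction of the way towards a point k' of K
   lying close to M_j.  By convexity of the |. M_i| the new points stay within
   d_i of every M_i and within d_j - eps of M_j, and since they move by less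
   than mu/2 every M_i stays within d_i of the new set.  So some closed set is
   no farther than K from each M_i and strictly closer to M_j, contradicting
   the minimality of K. *)

Section PointSetDistance.
Context {R : realType} {X : normedModType R}.
Implicit Types (p q : X) (A B : set X).

(* [fine] sends the value +oo of an empty [A] to 0: [dist p A] is |p A| only
   for nonempty [A]. *)
Definition dist p A : R := fine (distPS p A).

Lemma distPS_ge0 p A : (0 <= distPS p A)%E.
Proof. by apply: le_ereal_inf_tmp => _ [a _ <-]; rewrite lee_fin. Qed.

Lemma distPSE p A : A !=set0 -> distPS p A = (dist p A)%:E.
Proof.
move=> [a Aa]; rewrite /dist fineK // ge0_fin_numE ?distPS_ge0 //.
by apply: le_lt_trans (ltry `|p - a|); apply: ereal_inf_lbound; exists a.
Qed.

Lemma dist_ge0 p {A} : A !=set0 -> 0 <= dist p A.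
Proof. by move=> A0; rewrite -lee_fin -distPSE ?distPS_ge0. Qed.

Lemma dist_le p {a A} : A a -> dist p A <= `|p - a|.
Proof.
move=> Aa; rewrite -lee_fin -distPSE; last by exists a.
by apply: ereal_inf_lbound; exists a.
Qed.

Lemma dist_approx p {A} {e : R} : A !=set0 -> 0 < e ->
  exists2 a, A a & `|p - a| < dist p A + e.
Proof.
move=> A0 e0.
have : (distPS p A < (dist p A + e)%:E)%E by rewrite distPSE // lte_fin ltrDl.
by move/ereal_inf_lt => [_ [a Aa <-]]; rewrite lte_fin; exists a.
Qed.

Lemma dist_lip p q {A} : A !=set0 -> dist p A <= dist q A + `|p - q|.
Proof.
move=> A0; apply/ler_addgt0Pr => e e0.
have [a Aa qa] := dist_approx q A0 e0.
apply: le_trans (dist_le p Aa) _; apply: le_trans (ler_distD q p a) _.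
by rewrite addrAC addrC lerD2l ltW.
Qed.

Lemma closed_dist_le {A} (r : R) : A !=set0 -> closed [set p | dist p A <= r].
Proof.
move=> A0 p clp; apply/ler_addgt0Pr => e e0.
have [q [/= qr]] := clp _ (nbhsx_ballx p e e0).
rewrite -ball_normE /= => pq.
by apply: le_trans (dist_lip p q A0) _; rewrite lerD // ltW.
Qed.

Lemma dist_convex p q {A} {t : R} :
  convexS A -> A !=set0 -> 0 <= t -> t <= 1 ->
  dist (t *: p + (1 - t) *: q) A <= t * dist p A + (1 - t) * dist q A.
Proof.
move=> cA A0 t0 t1; apply/ler_addgt0Pr => e e0.
have [a Aa pa] := dist_approx p A0 e0.
have [b Ab qb] := dist_approx q A0 e0.
have t'0 : 0 <= 1 - t by rewrite subr_ge0.
apply: le_trans (dist_le _ (cA _ _ _ Aa Ab t0 t1)) _.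
have -> : t *: p + (1 - t) *: q - (t *: a + (1 - t) *: b) =
    t *: (p - a) + (1 - t) *: (q - b).
  by rewrite !scalerBr opprD addrACA.
apply: le_trans (ler_normD _ _) _; rewrite !normrZ !ger0_norm //.
have -> : t * dist p A + (1 - t) * dist q A + e =
    t * (dist p A + e) + (1 - t) * (dist q A + e).
  by rewrite !mulrDr addrACA -mulrDl subrKC mul1r.
by rewrite lerD // ler_wpM2l // ltW.
Qed.

Lemma sup_distPS_le A B (r : R) : B !=set0 ->
  (ereal_sup [set distPS a B | a in A] <= r%:E)%E <->
  (forall a, A a -> dist a B <= r).
Proof.
move=> B0; split => [ub a Aa | ub].
  rewrite -lee_fin -distPSE //; apply: le_trans ub.
  by apply: ereal_sup_ubound; exists a.
by apply: ge_ereal_sup => _ [a Aa <-]; rewrite distPSE // lee_fin ub.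
Qed.

Lemma sup_distPS_ge0 A B : A !=set0 ->
  (0 <= ereal_sup [set distPS a B | a in A])%E.
Proof.
move=> [a Aa]; apply: le_trans (distPS_ge0 a B) _.
by apply: ereal_sup_ubound; exists a.
Qed.

Lemma hausd_ge0 A B : A !=set0 -> (0 <= hausd A B)%E.
Proof. by move=> A0; rewrite le_max sup_distPS_ge0. Qed.

Lemma hausd_le A B (r : R) : A !=set0 -> B !=set0 ->
  (forall a, A a -> dist a B <= r) -> (forall b, B b -> dist b A <= r) ->
  (hausd A B <= r%:E)%E.
Proof.
by move=> A0 B0 AB BA; rewrite ge_max; apply/andP; split; apply/sup_distPS_le.
Qed.

Lemma exists_point_near_both {C K k} {a r e : R} : K k -> 0 < e ->
  C !=set0 -> (forall x, C x -> dist x K <= a) -> dist k C <= r ->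
  exists2 k', K k' & dist k' C <= a + e /\ `|k - k'| <= r + a + 2 * e.
Proof.
move=> Kk e0 C0 CK kC.
have [y Cy ky] := dist_approx k C0 e0.
have [k' Kk' yk'] := dist_approx y (ex_intro _ k Kk) e0.
have yK := CK y Cy.
exists k' => //; split.
  by apply: le_trans (dist_le k' Cy) _; rewrite distrC; lra.
by apply: le_trans (ler_distD y k k') _; lra.
Qed.

End PointSetDistance.

Lemma exists_uniform_margin {R : realType} {n : nat} {a r : 'I_n -> R} :
  (forall i, a i < r i) -> exists2 mu : R, 0 < mu & forall i, a i + mu <= r i.
Proof.
case: n a r => [|n] a r ar; first by exists 1 => // -[].
have [i0 _ i0min] := @arg_minP _ _ _ ord0 xpredT (fun i => r i - a i) erefl.
exists (r i0 - a i0) => [|i]; first by rewrite subr_gt0.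
by rewrite -lerBrDl i0min.
Qed.

Lemma lte_sum_strict {R : realType} {n : nat} {f g : 'I_n -> \bar R}
    (j : 'I_n) :
  (forall i, f i \is a fin_num) -> (forall i, (f i <= g i)%E) ->
  (f j < g j)%E ->
  (\sum_(i < n) f i < \sum_(i < n) g i)%E.
Proof.
move=> ffin fg fgj; rewrite (bigD1 j) //= [X in (_ < X)%E](bigD1 j) //=.
apply: lte_leD => //; last by apply: lee_sum => i _.
by apply/sum_fin_numP => i _ _.
Qed.

Section Improvement.
Context {R : realType} {X : normedModType R} {n : nat}.
Context {M : 'I_n -> set X} {K : set X} {a r : 'I_n -> R} {mu : R}.
Variable j : 'I_n.
Hypothesis M_convex : forall i, convexS (M i).
Hypothesis M_nonempty : forall i, M i !=set0.
Hypothesis K_nonempty : K !=set0.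
Hypothesis K_near_M : forall i k, K k -> dist k (M i) <= r i.
Hypothesis M_near_K : forall i x, M i x -> dist x K <= a i.
Hypothesis mu_gt0 : 0 < mu.
Hypothesis margin : forall i, a i + mu <= r i.

Let lam := mu / (4 * r j).

Let shrunk := [set p | (forall i, dist p (M i) <= r i) /\
                       dist p (M j) <= r j - lam * (mu / 2)].

Let aj_ge0 : 0 <= a j.
Proof.
have [x Mx] := M_nonempty j.
exact: le_trans (dist_ge0 x K_nonempty) (M_near_K _ _ Mx).
Qed.

Let rj_gt0 : 0 < r j.
Proof. by have := margin j; have := mu_gt0; have := aj_ge0; lra. Qed.

Let lam_gt0 : 0 < lam. Proof. by rewrite divr_gt0 ?mulr_gt0. Qed.

Let lam_le1 : lam <= 1.
Proof.
rewrite ler_pdivrMr ?mulr_gt0 // mul1r.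
by have := margin j; have := aj_ge0; have := rj_gt0; lra.
Qed.

Let closed_shrunk : closed shrunk.
Proof.
have -> : shrunk = \bigcap_(i in [set: 'I_n]) [set p | dist p (M i) <= r i]
    `&` [set p | dist p (M j) <= r j - lam * (mu / 2)].
  by apply/seteqP; split => p [pM pMj]; split => // i *; exact: pM.
apply: closedI; last exact: closed_dist_le.
by apply: closed_bigI => i _; exact: closed_dist_le.
Qed.

Let shrunk_near k : K k -> exists2 p, shrunk p & `|k - p| <= mu / 2.
Proof.
move=> Kk; have mu2 : 0 < mu / 2 by rewrite divr_gt0.
have [k' Kk' [k'Mj kk']] :=
  exists_point_near_both Kk mu2 (M_nonempty j) (M_near_K j) (K_near_M j k Kk).
have lam'0 : 0 <= 1 - lam by rewrite subr_ge0.
have dist_p i : dist (lam *: k' + (1 - lam) *: k) (M i) <=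
    lam * dist k' (M i) + (1 - lam) * dist k (M i).
  exact: dist_convex (M_convex i) (M_nonempty i) (ltW lam_gt0) lam_le1.
exists (lam *: k' + (1 - lam) *: k); first split.
- move=> i; apply: le_trans (dist_p i) _.
  have := K_near_M i k Kk; have := K_near_M i k' Kk'.
  by move=> /(ler_wpM2l (ltW lam_gt0)) + /(ler_wpM2l lam'0); lra.
- have k'Mj' : dist k' (M j) <= r j - mu / 2 by have := margin j; lra.
  apply: le_trans (dist_p j) _.
  have := K_near_M j k Kk => /(ler_wpM2l lam'0).
  by move: k'Mj' => /(ler_wpM2l (ltW lam_gt0)); rewrite mulrBr; lra.
have -> : k - (lam *: k' + (1 - lam) *: k) = lam *: (k - k').
  rewrite scalerBl scale1r scalerBr addrCA opprD opprB addrA subrr add0r.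
  by rewrite addrC.
have lam_r : lam * (2 * r j) = mu / 2 by rewrite /lam; field; rewrite gt_eqF.
rewrite normrZ gtr0_norm // -lam_r ler_pM2l //.
by have := margin j; lra.
Qed.

Lemma exists_improving_set : exists K' : set X,
  [/\ closed K', K' !=set0, forall i, (hausd K' (M i) <= (r i)%:E)%E
    & (hausd K' (M j) < (r j)%:E)%E].
Proof.
have shrunk0 : shrunk !=set0.
  by have [k Kk] := K_nonempty; have [p ? _] := shrunk_near _ Kk; exists p.
have M_near_shrunk i x : M i x -> dist x shrunk <= a i + mu / 2.
  move=> Mx; apply/ler_addgt0Pr => e e0.
  have [k Kk xk] := dist_approx x K_nonempty e0.
  have [p Sp kp] := shrunk_near _ Kk.
  apply: le_trans (dist_le x Sp) _; apply: le_trans (ler_distD k x p) _.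
  by have := M_near_K _ _ Mx; lra.
have lam_mu : lam * (mu / 2) <= mu / 2 by rewrite ler_piMl // divr_ge0 ?ltW.
exists shrunk; split => // [i|].
  apply: hausd_le => // [p [pM _]|x Mx]; first exact: pM.
  apply: le_trans (M_near_shrunk _ _ Mx) _.
  by have := margin i; have := mu_gt0; lra.
apply: le_lt_trans (_ : _ <= (r j - lam * (mu / 2))%:E)%E _.
  apply: hausd_le => // [p [_ pMj]|x Mx] //.
  by apply: le_trans (M_near_shrunk _ _ Mx) _; have := margin j; lra.
by rewrite lte_fin gtrBl mulr_gt0 // divr_gt0.
Qed.

End Improvement.

Lemma exists_hausd_improvement {R : realType} {X : normedModType R} {n : nat}
    {M : 'I_n -> set X} {K : set X} (j : 'I_n) :
  (forall i, convexS (M i)) -> (forall i, M i !=set0) -> K !=set0 ->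
  (forall i, (hausd K (M i) < +oo)%E) ->
  (forall i, (ereal_sup [set distPS x K | x in M i] < hausd K (M i))%E) ->
  exists K' : set X, [/\ closed K', K' !=set0,
    forall i, (hausd K' (M i) <= hausd K (M i))%E
    & (hausd K' (M j) < hausd K (M j))%E].
Proof.
move=> M_cvx M0 K0 K_fin a_lt.
pose a i := ereal_sup [set distPS x K | x in M i].
have fin_of_le i x : (0 <= x <= hausd K (M i))%E -> x = (fine x)%:E.
  by case/andP=> x0 xK; rewrite fineK // ge0_fin_numE // (le_lt_trans xK).
have hK i : hausd K (M i) = (fine (hausd K (M i)))%:E.
  by apply: fin_of_le; apply/andP; split; [exact: hausd_ge0 | exact: lexx].
have aE i : a i = (fine (a i))%:E.
  apply: fin_of_le; apply/andP; split; first exact: sup_distPS_ge0.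
  exact: ltW (a_lt i).
have K_near_M i k : K k -> dist k (M i) <= fine (hausd K (M i)).
  by move: k; apply/sup_distPS_le => //; rewrite -hK le_max lexx.
have M_near_K i x : M i x -> dist x K <= fine (a i).
  by move: x; apply/sup_distPS_le => //; rewrite -aE.
have [mu mu0 margin] : exists2 mu : R, 0 < mu &
    forall i, fine (a i) + mu <= fine (hausd K (M i)).
  by apply: exists_uniform_margin => i; rewrite -lte_fin -aE -hK; apply: a_lt.
have [K' [K'cl K'0 K'le K'lt]] :=
  exists_improving_set j M_cvx M0 K0 K_near_M M_near_K mu0 margin.
by exists K'; split => // [i|]; rewrite hK; [exact: K'le | exact: K'lt].
Qed.

Theorem mainTheorem17 (R : realType) (X : normedModType R) (n : nat)
  (M : 'I_n -> set X) :
  dim_le2 X ->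
  (0 < n)%N ->
  injective M ->
  (forall i, closed (M i) /\ convexS (M i) /\ M i !=set0) ->
  (forall i j, (hausd (M i) (M j) < +oo)%E) ->
  (exists K0, inSigma M K0) ->
  forall d : 'I_n -> \bar R,
  (exists K1, inSigma M K1 /\ forall i, hausd K1 (M i) = d i) ->
  forall K : set X, inSigma M K -> (forall i, hausd K (M i) = d i) ->
  exists i : 'I_n, d i = ereal_sup [set distPS x K | x in M i].
Proof.
move=> _ n_gt0 _ M_cvx _ _ d _ K [[_ [K0 K_fin]] K_min] Kd.
apply: contrapT => not_attained.
have a_lt i : (ereal_sup [set distPS x K | x in M i] < hausd K (M i))%E.
  rewrite lt_neqAle le_max lexx orbT Kd andbT.
  by apply/eqP => ad; apply: not_attained; exists i.
have [K' [K'cl K'0 K'le K'lt]] := exists_hausd_improvement (Ordinal n_gt0)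
  (fun i => (M_cvx i).2.1) (fun i => (M_cvx i).2.2) K0 K_fin a_lt.
have K'_fin i : (hausd K' (M i) < +oo)%E := le_lt_trans (K'le i) (K_fin i).
have := K_min K' (conj K'cl (conj K'0 K'_fin)); apply/negP; rewrite -ltNge.
apply: (lte_sum_strict (Ordinal n_gt0)) => // i.
by rewrite ge0_fin_numE ?hausd_ge0.
Qed.
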